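(* Let $\{X_n\}_{n\ge0}$ be a time-homogeneous discrete-time Markov chain with countably infinite state space $\mathcal{X}=\{x_i\}_{i\in\mathbb{N}}$ and transition probabilities $p_{ik}=\mathbb{P}(X_{n+1}=x_k\mid X_n=x_i)$. Let $\mathcal{A}_{\mathcal{X}}$ be a real separable Hilbert space with orthonormal basis $\{e_i\}_{i\in\mathbb{N}}$, and set $c_{ki}:=p_{ik}$. Then: (a) the product $v\cdot w:=\sum_{k=1}^\infty\big(\sum_{i=1}^\infty v_iw_ic_{ki}\big)e_k$ defines a Hilbert evolution algebra structure on $\mathcal{A}_{\mathcal{X}}$ with orthonormal natural basis $\{e_i\}$ and structure constants $c_{ki}$ (a Markov Hilbert evolution algebra); (b) if moreover there exist positive reals $\alpha_k,\beta_i$ ($i,k\in\mathbb{N}$) and $M_1,M_2>0$ with $\sum_{k=1}^\infty p_{ik}\alpha_k\le M_1\beta_i$ for all $i$ and $\sum_{i=1}^\infty p_{ik}\beta_i\le M_2\alpha_k$ for all $k$, then the evolution operator $C$ has domain $D(C)=\mathcal{A}_{\mathcal{X}}$, is bounded with $\|C\|\le(M_1M_2)^{1/2}$, and for every $n\ge1$ and $i\in\mathbb{N}$, $$C^n(e_i)=\sum_{k=1}^\infty p^{(n)}_{ik}e_k,\qquad p^{(n)}_{ik}:=\mathbb{P}(X_n=x_k\mid X_0=x_i).$$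
   Context: A (separable) Hilbert evolution algebra is a real or complex separable Hilbert space $(\mathcal{A},\langle\cdot,\cdot\rangle)$ equipped with a bilinear product $\cdot$ such that: (i) there exist an orthonormal basis $\{e_i\}_{i\in\mathbb{N}}$ (an orthonormal natural basis) and scalars $\{c_{ki}\}$ (structure constants) with $e_i\cdot e_i=\sum_{k=1}^\infty c_{ki}e_k$ and $e_i\cdot e_j=0$ for $i\neq j$; (ii) every left multiplication $L_v(w)=v\cdot w$ is a bounded operator on $\mathcal{A}$. The evolution operator is the linear operator $C:D(C)\to\mathcal{A}$ with domain $D(C)=\{v=\sum_iv_ie_i:\ \sum_{k=1}^\infty|\sum_{i=1}^\infty v_ic_{ki}|^2<\infty\}$ and $C(v)=\sum_{k=1}^\infty\big(\sum_{i=1}^\infty v_ic_{ki}\big)e_k$. *)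

From Stdlib Require Import Reals.
From Coquelicot Require Import Coquelicot.
Open Scope R_scope.

(* The real separable Hilbert space with orthonormal basis {e_i}_{i in N},
   realised concretely through coordinates as l^2(N): v = sum_i v_i e_i. *)
Definition l2 (v : nat -> R) : Prop := ex_series (fun i => (v i) ^ 2).
Definition l2norm (v : nat -> R) : R := sqrt (Series (fun i => (v i) ^ 2)).

Definition e (i : nat) : nat -> R := fun k => if Nat.eqb k i then 1 else 0.

Definition vadd (v w : nat -> R) : nat -> R := fun k => v k + w k.
Definition vscal (a : R) (v : nat -> R) : nat -> R := fun k => a * v k.

Definition is_Hilbert_evolution_algebra
  (prod : (nat -> R) -> (nat -> R) -> (nat -> R)) (c : nat -> nat -> R) : Prop :=
  (forall v w, l2 v -> l2 w -> l2 (prod v w)) /\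
  (forall a v v' w, l2 v -> l2 v' -> l2 w ->
      forall k, prod (vadd (vscal a v) v') w k = a * prod v w k + prod v' w k) /\
  (forall a v w w', l2 v -> l2 w -> l2 w' ->
      forall k, prod v (vadd (vscal a w) w') k = a * prod v w k + prod v w' k) /\
  (forall i, l2 (fun k => c k i) /\ forall k, prod (e i) (e i) k = c k i) /\
  (forall i j, i <> j -> forall k, prod (e i) (e j) k = 0) /\
  (forall v, l2 v -> exists K : R,
      forall w, l2 w -> l2norm (prod v w) <= K * l2norm w).

Definition evol (c : nat -> nat -> R) (v : nat -> R) : nat -> R :=
  fun k => Series (fun i => v i * c k i).

Definition in_dom_evol (c : nat -> nat -> R) (v : nat -> R) : Prop :=
  l2 v /\ (forall k, ex_series (fun i => v i * c k i)) /\ l2 (evol c v).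

(* Transition matrix of a time-homogeneous Markov chain on states {x_i}_{i in N}:
   p i k = P(X_{n+1} = x_k | X_n = x_i). *)
Definition stochastic_matrix (p : nat -> nat -> R) : Prop :=
  (forall i k, 0 <= p i k) /\ (forall i, is_series (fun k => p i k) 1).

(* n-step transition probabilities p^{(n)}_{ik} = P(X_n = x_k | X_0 = x_i),
   via the Chapman-Kolmogorov recursion. *)
Fixpoint nstep (p : nat -> nat -> R) (n : nat) : nat -> nat -> R :=
  match n with
  | O => fun i k => if Nat.eqb i k then 1 else 0
  | S m => fun i k => Series (fun j => nstep p m i j * p j k)
  end.

Definition markov_c (p : nat -> nat -> R) : nat -> nat -> R := fun k i => p i k.

Definition markov_prod (p : nat -> nat -> R) (v w : nat -> R) : nat -> R :=
  fun k => Series (fun i => v i * w i * markov_c p k i).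

(* (a) By Cauchy-Schwarz the pointwise product of two l^2 vectors lies in l^1 with
   norm at most |v| |w|; a stochastic matrix is a contraction of l^1 (Tonelli, as its
   rows sum to 1), and l^1 embeds in l^2 with |x|_2 <= |x|_1.
   (b) is the Schur test: Cauchy-Schwarz with weights beta gives
   (sum_i v_i p_ik)^2 <= M2 alpha_k sum_i v_i^2 p_ik / beta_i, and summing over k
   with Tonelli and the row condition yields M1 M2 |v|^2.  The formula for C^n e_i
   is the Chapman-Kolmogorov recursion defining the n-step probabilities. *)

From Stdlib Require Import Reals Lra Lia.
From Coquelicot Require Import Coquelicot.
Open Scope R_scope.

Lemma is_series_single (a : nat -> R) (i : nat) :
  (forall j, j <> i -> a j = 0) -> is_series a (a i).
Proof.
  revert a; induction i as [|i IH]; intros a Ha.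
  - apply (filterlim_ext (fun _ => a 0%nat)); [|apply filterlim_const].
    induction x as [|n IHn]; [now rewrite sum_O|].
    rewrite sum_Sn, <- IHn, (Ha (S n)) by lia. unfold plus; simpl; ring.
  - apply (is_series_decr_1 (V := R_NormedModule)).
    match goal with |- is_series _ ?l => replace l with (a (S i)) end.
    2: { rewrite (Ha 0%nat) by lia. unfold plus, opp; simpl; ring. }
    apply (IH (fun k => a (S k))). intros j Hj. apply Ha. lia.
Qed.

Lemma Series_single (a : nat -> R) (i : nat) :
  (forall j, j <> i -> a j = 0) -> Series a = a i.
Proof. intros Ha. now apply is_series_unique, is_series_single. Qed.

Lemma Series_le_dominated (a b : nat -> R) :
  (forall n, 0 <= a n <= b n) -> ex_series b -> ex_series a /\ Series a <= Series b.
Proof.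
  intros Hab Hb. split; [|now apply Series_le].
  apply (ex_series_le a b); auto.
  intros n. unfold norm; simpl. rewrite Rabs_pos_eq; apply Hab.
Qed.

Lemma Series_nonneg (a : nat -> R) :
  (forall n, 0 <= a n) -> ex_series a -> 0 <= Series a.
Proof.
  intros Ha Ea. rewrite <- (Series_single (fun _ => 0) 0) by auto.
  apply Series_le; auto. intros n; split; [lra | apply Ha].
Qed.

Lemma term_le_Series (a : nat -> R) (i : nat) :
  (forall n, 0 <= a n) -> ex_series a -> a i <= Series a.
Proof.
  intros Ha Ea. set (d := fun j => if Nat.eqb j i then a i else 0).
  replace (a i) with (d i) by (unfold d; now rewrite Nat.eqb_refl).
  rewrite <- (Series_single d i).
  - apply Series_le; auto. intros j. unfold d.
    destruct (Nat.eqb_spec j i); subst; split; auto with real.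
  - intros j Hj. unfold d. now apply Nat.eqb_neq in Hj; rewrite Hj.
Qed.

Lemma sum_n_nonneg (a : nat -> R) (N : nat) :
  (forall n, 0 <= a n) -> 0 <= sum_n a N.
Proof.
  intros Ha. induction N as [|N IH]; [rewrite sum_O; apply Ha|].
  rewrite sum_Sn. specialize (Ha (S N)). unfold plus; simpl; lra.
Qed.

Lemma sum_n_le_Series (a : nat -> R) (N : nat) :
  (forall n, 0 <= a n) -> ex_series a -> sum_n a N <= Series a.
Proof.
  intros Ha Ea. apply (is_lim_seq_incr_compare (sum_n a)).
  - now apply Series_correct.
  - intros n. rewrite sum_Sn. specialize (Ha (S n)). unfold plus; simpl; lra.
Qed.

Lemma ex_series_bounded_sum_n (a : nat -> R) (B : R) :
  (forall n, 0 <= a n) -> (forall N, sum_n a N <= B) -> ex_series a /\ Series a <= B.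
Proof.
  intros Ha HB.
  assert (Hincr : forall n, sum_n a n <= sum_n a (S n)).
  { intros n. rewrite sum_Sn. specialize (Ha (S n)). unfold plus; simpl; lra. }
  destruct (ex_finite_lim_seq_incr (sum_n a) B Hincr HB) as [l Hl].
  assert (Ea : ex_series a) by (exists l; exact Hl).
  split; auto.
  rewrite (is_series_unique a l Hl).
  apply (is_lim_seq_le (sum_n a) (fun _ => B) l B); auto. apply is_lim_seq_const.
Qed.

Lemma Series_sum_n_comm (a : nat -> nat -> R) (K : nat) :
  (forall j, ex_series (a j)) ->
  ex_series (fun i => sum_n (fun j => a j i) K) /\
  Series (fun i => sum_n (fun j => a j i) K) = sum_n (fun j => Series (a j)) K.
Proof.
  intros Ea. induction K as [|K [IHe IHs]].
  - rewrite sum_O. split.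
    + apply (ex_series_ext (a 0%nat)); auto. intros; now rewrite sum_O.
    + apply Series_ext. intros; now rewrite sum_O.
  - assert (Hext : forall i, sum_n (fun j => a j i) K + a (S K) i
                             = sum_n (fun j => a j i) (S K))
      by (intros; now rewrite sum_Sn).
    rewrite sum_Sn, <- IHs. unfold plus; simpl. split.
    + apply (ex_series_ext _ _ Hext). now apply (ex_series_plus _ (a (S K))).
    + rewrite <- Series_plus by auto. apply Series_ext. intros; now rewrite Hext.
Qed.

Lemma Series_Tonelli (a : nat -> nat -> R) :
  (forall i k, 0 <= a i k) -> (forall i, ex_series (a i)) ->
  ex_series (fun i => Series (a i)) ->
  (forall k, ex_series (fun i => a i k)) /\
  ex_series (fun k => Series (fun i => a i k)) /\
  Series (fun k => Series (fun i => a i k)) <= Series (fun i => Series (a i)).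
Proof.
  intros Ha Erow Esum.
  assert (Ecol : forall k, ex_series (fun i => a i k)).
  { intros k. apply (Series_le_dominated _ (fun i => Series (a i))); auto.
    intros i. split; auto. now apply term_le_Series. }
  split; auto. apply ex_series_bounded_sum_n.
  - intros k. now apply Series_nonneg.
  - intros K. destruct (Series_sum_n_comm (fun k i => a i k) K Ecol) as [_ <-].
    apply Series_le; auto. intros i. split.
    + now apply sum_n_nonneg.
    + now apply sum_n_le_Series.
Qed.

Lemma amgm_of_sqr_le (f g h t : R) :
  0 <= f -> 0 <= g -> 0 <= h -> f ^ 2 <= g * h -> 0 < t -> 2 * f <= t * g + h / t.
Proof.
  intros Hf Hg Hh Hfgh Ht. apply (Rmult_le_reg_r t); auto.
  replace ((t * g + h / t) * t) with (t ^ 2 * g + h) by (field; lra).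
  apply Rsqr_incr_0_var; [|nra]. rewrite !Rsqr_pow2.
  assert (0 <= (t ^ 2 * g - h) ^ 2) by apply pow2_ge_0.
  assert (t ^ 2 * f ^ 2 <= t ^ 2 * (g * h)) by (apply Rmult_le_compat_l; nra).
  nra.
Qed.

Lemma sqr_le_of_forall_amgm (S A B : R) :
  0 <= S -> 0 <= A -> 0 <= B -> (forall t, 0 < t -> 2 * S <= t * A + B / t) ->
  S ^ 2 <= A * B.
Proof.
  intros HS HA HB Ht. destruct (Req_dec S 0) as [->|HS0]; [nra|].
  (* The optimal choice is [t = S / A]; for [A = 0] a large [t] contradicts [S > 0]. *)
  destruct (Req_dec A 0) as [->|HA0].
  - exfalso. specialize (Ht ((B + 1) / S) ltac:(apply Rdiv_lt_0_compat; lra)).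
    replace (B / ((B + 1) / S)) with (S * (B / (B + 1))) in Ht by (field; lra).
    assert (B / (B + 1) < 1) by (apply Rmult_lt_reg_r with (B + 1); field_simplify; lra).
    nra.
  - specialize (Ht (S / A) ltac:(apply Rdiv_lt_0_compat; lra)).
    replace (S / A * A + B / (S / A)) with (S + A * B / S) in Ht by (field; lra).
    apply (Rmult_le_reg_r (/ S)); [apply Rinv_0_lt_compat; lra|].
    replace (S ^ 2 * / S) with S by (field; lra). unfold Rdiv in Ht. lra.
Qed.

(* Sum the pointwise bound [2 f <= t g + h / t] and optimise over [t]. *)
Lemma Series_Cauchy_Schwarz (f g h : nat -> R) :
  (forall n, 0 <= f n) -> (forall n, 0 <= g n) -> (forall n, 0 <= h n) ->
  (forall n, f n ^ 2 <= g n * h n) -> ex_series g -> ex_series h ->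
  ex_series f /\ Series f ^ 2 <= Series g * Series h.
Proof.
  intros Hf Hg Hh Hfgh Eg Eh.
  assert (Hbound : forall t, 0 < t ->
    ex_series f /\ 2 * Series f <= t * Series g + Series h / t).
  { intros t Ht.
    set (b := fun n => / 2 * (t * g n + / t * h n)).
    assert (Eb : ex_series b).
    { apply (ex_series_scal_l (/ 2) (fun n => t * g n + / t * h n)).
      apply (ex_series_plus (fun n => t * g n) (fun n => / t * h n));
        [apply (ex_series_scal_l t g) | apply (ex_series_scal_l (/ t) h)]; auto. }
    assert (Sb : Series b = / 2 * (t * Series g + Series h / t)).
    { unfold b. rewrite Series_scal_l, Series_plus, !Series_scal_l.
      - unfold Rdiv; ring.
      - now apply (ex_series_scal_l t g).
      - now apply (ex_series_scal_l (/ t) h). }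
    destruct (Series_le_dominated f b) as [Ef Hfb]; auto.
    - intros n. split; auto. unfold b.
      pose proof (amgm_of_sqr_le (f n) (g n) (h n) t (Hf n) (Hg n) (Hh n) (Hfgh n) Ht).
      unfold Rdiv in *. lra.
    - split; auto. lra. }
  destruct (Hbound 1 Rlt_0_1) as [Ef _]. split; auto.
  apply sqr_le_of_forall_amgm; try (apply Series_nonneg; auto).
  intros t Ht. apply Hbound, Ht.
Qed.

Lemma Series_sqr_le_sqr_Series (a : nat -> R) :
  (forall n, 0 <= a n) -> ex_series a ->
  ex_series (fun n => a n ^ 2) /\ Series (fun n => a n ^ 2) <= Series a ^ 2.
Proof.
  intros Ha Ea.
  replace (Series a ^ 2) with (Series (fun n => Series a * a n))
    by (rewrite Series_scal_l; ring).
  apply Series_le_dominated; [|now apply (ex_series_scal_l (Series a) a)].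
  intros n. pose proof (term_le_Series a n Ha Ea). split; [apply pow2_ge_0|].
  specialize (Ha n). simpl. nra.
Qed.

Lemma Series_sqr_le_of_Rabs_le (x s : nat -> R) :
  (forall n, Rabs (x n) <= s n) -> ex_series (fun n => s n ^ 2) ->
  ex_series (fun n => x n ^ 2) /\ Series (fun n => x n ^ 2) <= Series (fun n => s n ^ 2).
Proof.
  intros Hxs Es. apply Series_le_dominated; auto.
  intros n. split; [apply pow2_ge_0|].
  rewrite <- pow2_abs. apply pow_incr. split; [apply Rabs_pos | apply Hxs].
Qed.

Section NonnegativeKernel.

Variable K : nat -> nat -> R.
Hypothesis K_ge0 : forall i k, 0 <= K i k.

Lemma kernel_l1_to_l2 (u : nat -> R) :
  (forall i, ex_series (K i) /\ Series (K i) <= 1) ->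
  ex_series (fun i => Rabs (u i)) ->
  (forall k, ex_series (fun i => u i * K i k)) /\
  ex_series (fun k => Series (fun i => u i * K i k) ^ 2) /\
  Series (fun k => Series (fun i => u i * K i k) ^ 2) <= Series (fun i => Rabs (u i)) ^ 2.
Proof.
  intros Hrow Eu.
  set (a := fun i k => Rabs (u i) * K i k).
  assert (Ha : forall i k, 0 <= a i k)
    by (intros; apply Rmult_le_pos; [apply Rabs_pos | apply K_ge0]).
  assert (Erow : forall i, ex_series (a i))
    by (intros i; apply (ex_series_scal_l (Rabs (u i)) (K i)), Hrow).
  assert (Hrowsum : forall i, 0 <= Series (a i) <= Rabs (u i)).
  { intros i. split; [now apply Series_nonneg|].
    unfold a. rewrite Series_scal_l. destruct (Hrow i) as [_ H1].
    pose proof (Rabs_pos (u i)). nra. }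
  destruct (Series_le_dominated (fun i => Series (a i)) _ Hrowsum Eu) as [Esum Hsum].
  destruct (Series_Tonelli a Ha Erow Esum) as [Ecol [Es Hs]].
  set (s := fun k => Series (fun i => a i k)) in *.
  assert (Hak : forall i k, a i k = Rabs (u i * K i k))
    by (intros; unfold a; now rewrite Rabs_mult, (Rabs_pos_eq (K i k))).
  assert (Eabs : forall k, ex_series (fun i => Rabs (u i * K i k)))
    by (intros k; apply (ex_series_ext _ _ (fun i => Hak i k)), Ecol).
  assert (Hx : forall k, Rabs (Series (fun i => u i * K i k)) <= s k).
  { intros k. unfold s. rewrite (Series_ext _ _ (fun i => Hak i k)).
    now apply Series_Rabs. }
  assert (Hs0 : forall k, 0 <= s k) by (intros; now apply Series_nonneg).
  destruct (Series_sqr_le_sqr_Series s Hs0 Es) as [Es2 Hs2].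
  destruct (Series_sqr_le_of_Rabs_le _ s Hx Es2) as [Ex2 Hx2].
  split; [intros k; now apply ex_series_Rabs|]. split; auto.
  apply (Rle_trans _ _ _ Hx2), (Rle_trans _ _ _ Hs2), pow_incr.
  split; [now apply Series_nonneg | lra].
Qed.

Section SchurTest.

Variables (alpha beta : nat -> R) (M1 M2 : R).
Hypothesis alpha_gt0 : forall k, 0 < alpha k.
Hypothesis beta_gt0 : forall i, 0 < beta i.
Hypothesis M2_ge0 : 0 <= M2.
Hypothesis row_bound : forall i,
  ex_series (fun k => K i k * alpha k) /\ Series (fun k => K i k * alpha k) <= M1 * beta i.
Hypothesis col_bound : forall k,
  ex_series (fun i => K i k * beta i) /\ Series (fun i => K i k * beta i) <= M2 * alpha k.

Lemma Schur_entry_bound (i k : nat) : K i k * alpha k <= M1 * beta i.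
Proof.
  destruct (row_bound i) as [Er Hr]. eapply Rle_trans; [|exact Hr].
  apply (term_le_Series (fun k => K i k * alpha k)); auto.
  intros; apply Rmult_le_pos; [apply K_ge0 | now apply Rlt_le].
Qed.

Lemma Schur_column_bound (v : nat -> R) (k : nat) :
  ex_series (fun i => v i ^ 2) ->
  ex_series (fun i => v i * K i k) /\
  ex_series (fun i => v i ^ 2 / beta i * K i k) /\
  Series (fun i => v i * K i k) ^ 2
    <= M2 * (alpha k * Series (fun i => v i ^ 2 / beta i * K i k)).
Proof.
  intros Ev.
  assert (Hw0 : forall i, 0 <= v i ^ 2 / beta i * K i k).
  { intros i. apply Rmult_le_pos; [|apply K_ge0].
    apply Rdiv_le_0_compat; [apply pow2_ge_0 | apply beta_gt0]. }
  assert (Ew : ex_series (fun i => v i ^ 2 / beta i * K i k)).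
  { apply (Series_le_dominated _ (fun i => M1 / alpha k * v i ^ 2));
      [|now apply (ex_series_scal_l _ (fun i => v i ^ 2))].
    intros i. split; auto.
    pose proof (alpha_gt0 k). pose proof (beta_gt0 i).
    pose proof (Schur_entry_bound i k) as HKa.
    replace (v i ^ 2 / beta i * K i k)
      with (v i ^ 2 / (alpha k * beta i) * (K i k * alpha k)) by (field; lra).
    replace (M1 / alpha k * v i ^ 2)
      with (v i ^ 2 / (alpha k * beta i) * (M1 * beta i)) by (field; lra).
    apply Rmult_le_compat_l; auto.
    apply Rdiv_le_0_compat; [apply pow2_ge_0 | nra]. }
  destruct (col_bound k) as [Eh Hh].
  (* Split [|v i| K i k] as the product of the square roots of
     [v i ^ 2 / beta i * K i k] and [K i k * beta i]. *)
  destruct (Series_Cauchy_Schwarz (fun i => Rabs (v i) * K i k)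
              (fun i => v i ^ 2 / beta i * K i k) (fun i => K i k * beta i))
    as [Ef Hf]; auto.
  - intros i. apply Rmult_le_pos; [apply Rabs_pos | apply K_ge0].
  - intros i. apply Rmult_le_pos; [apply K_ge0 | now apply Rlt_le].
  - intros i. right. rewrite <- (pow2_abs (v i)). pose proof (beta_gt0 i). field. lra.
  - assert (Hvk : forall i, Rabs (v i) * K i k = Rabs (v i * K i k))
      by (intros; now rewrite Rabs_mult, (Rabs_pos_eq (K i k))).
    rewrite (Series_ext _ _ Hvk) in Hf. apply (ex_series_ext _ _ Hvk) in Ef.
    split; [now apply ex_series_Rabs|]. split; auto.
    assert (0 <= Series (fun i => v i ^ 2 / beta i * K i k)) by now apply Series_nonneg.
    rewrite <- pow2_abs.
    apply (Rle_trans _ (Series (fun i => Rabs (v i * K i k)) ^ 2)).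
    + apply pow_incr. split; [apply Rabs_pos | now apply Series_Rabs].
    + eapply Rle_trans; [exact Hf|].
      replace (M2 * _) with (Series (fun i => v i ^ 2 / beta i * K i k) * (M2 * alpha k))
        by ring.
      now apply Rmult_le_compat_l.
Qed.

Lemma Schur_weighted_sum (v : nat -> R) :
  ex_series (fun i => v i ^ 2) ->
  ex_series (fun k => alpha k * Series (fun i => v i ^ 2 / beta i * K i k)) /\
  Series (fun k => alpha k * Series (fun i => v i ^ 2 / beta i * K i k))
    <= M1 * Series (fun i => v i ^ 2).
Proof.
  intros Ev.
  set (a := fun i k => v i ^ 2 / beta i * (K i k * alpha k)).
  assert (Hv0 : forall i, 0 <= v i ^ 2 / beta i)
    by (intros i; apply Rdiv_le_0_compat; [apply pow2_ge_0 | apply beta_gt0]).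
  assert (Ha : forall i k, 0 <= a i k).
  { intros i k. apply Rmult_le_pos; auto.
    apply Rmult_le_pos; [apply K_ge0 | now apply Rlt_le]. }
  assert (Erow : forall i, ex_series (a i))
    by (intros i; apply (ex_series_scal_l _ (fun k => K i k * alpha k)), row_bound).
  assert (Hrowsum : forall i, 0 <= Series (a i) <= M1 * v i ^ 2).
  { intros i. split; [now apply Series_nonneg|].
    unfold a. rewrite Series_scal_l. destruct (row_bound i) as [_ Hr].
    pose proof (beta_gt0 i).
    replace (M1 * v i ^ 2) with (v i ^ 2 / beta i * (M1 * beta i)) by (field; lra).
    now apply Rmult_le_compat_l. }
  destruct (Series_le_dominated (fun i => Series (a i)) _ Hrowsum)
    as [Esum Hsum]; [now apply (ex_series_scal_l _ (fun i => v i ^ 2))|].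
  rewrite Series_scal_l in Hsum.
  destruct (Series_Tonelli a Ha Erow Esum) as [_ [Es Hs]].
  assert (Hcol : forall k, Series (fun i => a i k)
                           = alpha k * Series (fun i => v i ^ 2 / beta i * K i k)).
  { intros k. rewrite <- Series_scal_l. apply Series_ext. intros i. unfold a. ring. }
  rewrite (Series_ext _ _ Hcol) in Hs. apply (ex_series_ext _ _ Hcol) in Es.
  split; [exact Es | lra].
Qed.

Theorem Schur_test (v : nat -> R) :
  ex_series (fun i => v i ^ 2) ->
  (forall k, ex_series (fun i => v i * K i k)) /\
  ex_series (fun k => Series (fun i => v i * K i k) ^ 2) /\
  Series (fun k => Series (fun i => v i * K i k) ^ 2) <= M1 * M2 * Series (fun i => v i ^ 2).
Proof.
  intros Ev.
  destruct (Schur_weighted_sum v Ev) as [Ew Hw].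
  split; [intros k; now apply (Schur_column_bound v k)|].
  destruct (Series_le_dominated (fun k => Series (fun i => v i * K i k) ^ 2)
              (fun k => M2 * (alpha k * Series (fun i => v i ^ 2 / beta i * K i k))))
    as [Ec Hc].
  - intros k. split; [apply pow2_ge_0 | now apply Schur_column_bound].
  - now apply (ex_series_scal_l M2
      (fun k => alpha k * Series (fun i => v i ^ 2 / beta i * K i k))).
  - split; auto. rewrite Series_scal_l in Hc.
    eapply Rle_trans; [exact Hc|]. rewrite (Rmult_comm M1), Rmult_assoc.
    now apply Rmult_le_compat_l.
Qed.

End SchurTest.

End NonnegativeKernel.

Lemma l2norm_le_scale (x y : nat -> R) (c : R) :
  0 <= c -> Series (fun k => x k ^ 2) <= c ^ 2 * Series (fun k => y k ^ 2) ->
  l2norm x <= c * l2norm y.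
Proof.
  intros Hc Hxy. unfold l2norm.
  rewrite <- (sqrt_pow2 c Hc) at 1. rewrite <- sqrt_mult_alt by apply pow2_ge_0.
  apply sqrt_le_1_alt, Hxy.
Qed.

Section MarkovChain.

Variable p : nat -> nat -> R.
Hypothesis Hp : stochastic_matrix p.

Lemma stochastic_row (i : nat) : ex_series (p i) /\ Series (p i) = 1.
Proof.
  destruct Hp as [_ Hrow]. split; [now exists 1|]. now apply is_series_unique.
Qed.

Lemma stochastic_entry_le_1 (i k : nat) : p i k <= 1.
Proof.
  destruct (stochastic_row i) as [Er Sr]. rewrite <- Sr.
  apply term_le_Series; [apply Hp | exact Er].
Qed.

Lemma markov_prod_l2 (v w : nat -> R) :
  l2 v -> l2 w ->
  (forall k, ex_series (fun i => v i * w i * markov_c p k i)) /\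
  l2 (markov_prod p v w) /\
  Series (fun k => markov_prod p v w k ^ 2)
    <= Series (fun i => v i ^ 2) * Series (fun i => w i ^ 2).
Proof.
  intros Hv Hw.
  destruct (Series_Cauchy_Schwarz (fun i => Rabs (v i * w i))
              (fun i => v i ^ 2) (fun i => w i ^ 2)) as [Eu Hu]; auto.
  - intros; apply Rabs_pos.
  - intros; apply pow2_ge_0.
  - intros; apply pow2_ge_0.
  - intros i. right. rewrite pow2_abs. ring.
  - destruct (kernel_l1_to_l2 p (proj1 Hp) (fun i => v i * w i)) as [Ek [El Hl]]; auto.
    { intros i. destruct (stochastic_row i) as [Er ->]. split; [exact Er | lra]. }
    repeat split; auto. eapply Rle_trans; [exact Hl | exact Hu].
Qed.

Lemma markov_prod_comm (v w : nat -> R) (k : nat) :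
  markov_prod p v w k = markov_prod p w v k.
Proof. apply Series_ext. intros; ring. Qed.

Lemma markov_prod_linear_l (a : R) (v v' w : nat -> R) (k : nat) :
  l2 v -> l2 v' -> l2 w ->
  markov_prod p (vadd (vscal a v) v') w k = a * markov_prod p v w k + markov_prod p v' w k.
Proof.
  intros Hv Hv' Hw.
  destruct (markov_prod_l2 v w Hv Hw) as [E _].
  destruct (markov_prod_l2 v' w Hv' Hw) as [E' _].
  unfold markov_prod. rewrite <- Series_scal_l, <- Series_plus.
  - apply Series_ext. intros; unfold vadd, vscal; ring.
  - apply (ex_series_scal_l a (fun i => v i * w i * markov_c p k i)), E.
  - apply E'.
Qed.

Lemma markov_prod_basis (i j k : nat) :
  markov_prod p (e i) (e j) k = if Nat.eqb i j then markov_c p k i else 0.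
Proof.
  unfold markov_prod. rewrite (Series_single _ i).
  - unfold e. rewrite Nat.eqb_refl, (Nat.eqb_sym i j).
    destruct (Nat.eqb j i); ring.
  - intros l Hl. unfold e. apply Nat.eqb_neq in Hl. rewrite Hl. ring.
Qed.

Lemma markov_evolution_algebra :
  is_Hilbert_evolution_algebra (markov_prod p) (markov_c p).
Proof.
  split; [|split; [|split; [|split; [|split]]]].
  - intros v w Hv Hw. apply (markov_prod_l2 v w Hv Hw).
  - intros a v v' w Hv Hv' Hw k. now apply markov_prod_linear_l.
  - intros a v w w' Hv Hw Hw' k.
    rewrite !(markov_prod_comm v). now apply markov_prod_linear_l.
  - intros i. split.
    + apply (Series_le_dominated _ (p i)); [|apply stochastic_row].
      intros k. pose proof (stochastic_entry_le_1 i k). pose proof (proj1 Hp i k).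
      unfold markov_c. split; [apply pow2_ge_0 | simpl; nra].
    + intros k. rewrite markov_prod_basis, Nat.eqb_refl. reflexivity.
  - intros i j Hij k. rewrite markov_prod_basis. apply Nat.eqb_neq in Hij. now rewrite Hij.
  - intros v Hv. exists (l2norm v). intros w Hw.
    destruct (markov_prod_l2 v w Hv Hw) as [_ [_ Hvw]].
    apply l2norm_le_scale; [apply sqrt_pos|].
    unfold l2norm. rewrite pow2_sqrt; auto.
    apply Series_nonneg; [intros; apply pow2_ge_0 | exact Hv].
Qed.

End MarkovChain.

Lemma markov_evol_iter_basis (p : nat -> nat -> R) (n i k : nat) :
  Nat.iter n (evol (markov_c p)) (e i) k = nstep p n i k.
Proof.
  revert k. induction n as [|n IH]; intros k; simpl.
  - unfold e. now rewrite Nat.eqb_sym.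
  - apply Series_ext. intros j. now rewrite IH.
Qed.

Theorem mainTheorem4 (p : nat -> nat -> R) (Hp : stochastic_matrix p) :
  (* (a) *)
  ((forall v w, l2 v -> l2 w -> forall k,
       ex_series (fun i => v i * w i * markov_c p k i)) /\
   is_Hilbert_evolution_algebra (markov_prod p) (markov_c p)) /\
  (* (b) *)
  (forall (alpha beta : nat -> R) (M1 M2 : R),
     (forall k, 0 < alpha k) -> (forall i, 0 < beta i) -> 0 < M1 -> 0 < M2 ->
     (forall i, ex_series (fun k => p i k * alpha k) /\
                Series (fun k => p i k * alpha k) <= M1 * beta i) ->
     (forall k, ex_series (fun i => p i k * beta i) /\
                Series (fun i => p i k * beta i) <= M2 * alpha k) ->
     (forall v, in_dom_evol (markov_c p) v <-> l2 v) /\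
     (forall v, l2 v ->
        l2norm (evol (markov_c p) v) <= sqrt (M1 * M2) * l2norm v) /\
     (forall (n i : nat), (1 <= n)%nat -> forall k,
        Nat.iter n (evol (markov_c p)) (e i) k = nstep p n i k)).
Proof.
  split.
  - split; [intros v w Hv Hw; apply (markov_prod_l2 p Hp v w Hv Hw)|].
    apply markov_evolution_algebra, Hp.
  - intros alpha beta M1 M2 Ha Hb HM1 HM2 Hrow Hcol.
    pose proof (Schur_test p (proj1 Hp) alpha beta M1 M2 Ha Hb (Rlt_le _ _ HM2) Hrow Hcol)
      as Hschur.
    split; [|split].
    + intros v. split; [now intros [Hv _]|].
      intros Hv. destruct (Hschur v Hv) as [Ek [El _]]. now split.
    + intros v Hv. destruct (Hschur v Hv) as [_ [_ Hl]].
      apply l2norm_le_scale; [apply sqrt_pos|].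
      rewrite pow2_sqrt; [exact Hl | nra].
    + intros n i _ k. apply markov_evol_iter_basis.
Qed.
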